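(* Let ${\tt D}=({\tt M},{\tt C},\equiv,\underline{\cdot})$ be a reflective distillery whose calculus is deterministic, and let $s$ be an initial state. For every derivation $d:\underline{s}\multimap^* t$ there is an execution $\rho: s\to^* s'$ such that $t\equiv\underline{s'}$, $|\rho|_{\mathtt m}=|d|_{\mathtt m}$, $|\rho|_{\mathtt e}=|d|_{\mathtt e}$ and $|\rho|_{\mathtt p}=|d|$.
   Context: A distillery ${\tt D}=({\tt M},{\tt C},\equiv,\underline{\cdot})$ consists of: (1) an abstract machine ${\tt M}$: a deterministic labelled transition system $\to$ on states, with initial states (in bijection with closed $\lambda$-terms; states reachable from initial ones are reachable) and a partition of transitions into commutative ($\to_{\mathtt c}$) and principal ones, the latter partitioned into multiplicative ($\to_{\mathtt m}$) and exponential ($\to_{\mathtt e}$); (2) a calculus ${\tt C}$ given by rewriting relations $\multimap_{\mathtt m},\multimap_{\mathtt e}$ on terms, $\multimap:=\multimap_{\mathtt m}\cup\multimap_{\mathtt e}$; (3) an equivalence $\equiv$ on terms that is a strong bisimulation: for $\mathtt x\in\{\mathtt m,\mathtt e\}$, $t\equiv u$ and $t\multimap_{\mathtt x}t'$ imply $u\multimap_{\mathtt x}u'$ for some $u'\equiv t'$; (4) a decoding $\underline{\cdot}$ from states to terms such that on reachable states: $s\to_{\mathtt c}s'$ implies $\underline{s}\equiv\underline{s'}$; $s\to_{\mathtt m}s'$ implies $\underline{s}\multimap_{\mathtt m}t\equiv\underline{s'}$ for some $t$; $s\to_{\mathtt e}s'$ implies $\underline{s}\multimap_{\mathtt e}t\equiv\underline{s'}$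 for some $t$. Reflective: (Termination) $\to_{\mathtt c}$ terminates on reachable states; (Progress) if $s$ is reachable, no $\to_{\mathtt c}$ transition applies to $s$, and $\underline{s}\multimap_{\mathtt x}t$ with $\mathtt x\in\{\mathtt m,\mathtt e\}$, then $s\to_{\mathtt x}s'$ for some $s'$. The calculus is deterministic if every term $t$ admits at most one pair $(\mathtt x,u)$ with $t\multimap_{\mathtt x}u$. An execution is a sequence of transitions from an initial state; $|\rho|_{\mathtt m},|\rho|_{\mathtt e},|\rho|_{\mathtt p}$ count multiplicative, exponential and principal transitions of $\rho$; for a derivation $d$, $|d|$ is its length and $|d|_{\mathtt m},|d|_{\mathtt e}$ count its $\multimap_{\mathtt m}$ and $\multimap_{\mathtt e}$ steps. *)

From Stdlib Require Import List RelationClasses.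
Import ListNotations.
Set Implicit Arguments.

Inductive lterm : Type :=
| LVar : nat -> lterm
| LAbs : lterm -> lterm
| LApp : lterm -> lterm -> lterm.

Fixpoint lclosed_at (n : nat) (t : lterm) : Prop :=
  match t with
  | LVar k => k < n
  | LAbs u => lclosed_at (S n) u
  | LApp u v => lclosed_at n u /\ lclosed_at n v
  end.

Definition closed_lterm := { t : lterm | lclosed_at 0 t }.

(* Kinds of machine transitions: commutative, multiplicative, exponential. *)
Inductive mlabel : Type := Lc | Lm | Le.
(* Kinds of calculus steps: multiplicative, exponential. *)
Inductive rkind : Type := Km | Ke.

Definition label_of_kind (x : rkind) : mlabel :=
  match x with Km => Lm | Ke => Le end.

Record Distillery : Type := {
  State : Type;
  step : State -> mlabel -> State -> Prop;
  step_det : forall s l1 s1 l2 s2, step s l1 s1 -> step s l2 s2 -> l1 = l2 /\ s1 = s2;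
  initial : State -> Prop;
  load : closed_lterm -> State;
  load_inj : forall t u, load t = load u -> t = u;
  initial_load : forall s, initial s <-> exists t, load t = s;
  Term : Type;
  red : rkind -> Term -> Term -> Prop;
  equiv : Term -> Term -> Prop;
  equiv_Equivalence : Equivalence equiv;
  equiv_bisim : forall x t u t', equiv t u -> red x t t' ->
      exists u', red x u u' /\ equiv t' u';
  decode : State -> Term
}.

Inductive reachable (D : Distillery) : State D -> Prop :=
| reach_init : forall s, initial D s -> reachable D s
| reach_step : forall s l s', reachable D s -> step D s l s' -> reachable D s'.

Definition decoding_ok (D : Distillery) : Prop :=
  (forall s s', reachable D s -> step D s Lc s' -> equiv D (decode D s) (decode D s')) /\
  (forall x s s', reachable D s -> step D s (label_of_kind x) s' ->
      exists t, red D x (decode D s) t /\ equiv D t (decode D s')).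

Definition is_distillery (D : Distillery) : Prop := decoding_ok D.

Definition reflective (D : Distillery) : Prop :=
  (forall s, reachable D s -> Acc (fun s2 s1 => step D s1 Lc s2) s) /\
  (forall s x t, reachable D s -> (forall s', ~ step D s Lc s') ->
      red D x (decode D s) t -> exists s', step D s (label_of_kind x) s').

Definition calculus_deterministic (D : Distillery) : Prop :=
  forall t x1 u1 x2 u2, red D x1 t u1 -> red D x2 t u2 -> x1 = x2 /\ u1 = u2.

Inductive derivation (D : Distillery) : Term D -> Term D -> list rkind -> Prop :=
| der_refl : forall t, derivation D t t []
| der_step : forall x t u v ks, red D x t u -> derivation D u v ks ->
    derivation D t v (x :: ks).

Inductive run (D : Distillery) : State D -> State D -> list mlabel -> Prop :=
| run_refl : forall s, run D s s []
| run_step : forall l s s1 s2 ls, step D s l s1 -> run D s1 s2 ls ->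
    run D s s2 (l :: ls).

Definition execution (D : Distillery) (s s' : State D) (ls : list mlabel) : Prop :=
  initial D s /\ run D s s' ls.

Definition is_principal (l : mlabel) : bool :=
  match l with Lc => false | _ => true end.
Definition mlabel_eqb (a b : mlabel) : bool :=
  match a, b with Lc, Lc | Lm, Lm | Le, Le => true | _, _ => false end.
Definition rkind_eqb (a b : rkind) : bool :=
  match a, b with Km, Km | Ke, Ke => true | _, _ => false end.

Definition exec_m (ls : list mlabel) : nat := length (filter (mlabel_eqb Lm) ls).
Definition exec_e (ls : list mlabel) : nat := length (filter (mlabel_eqb Le) ls).
Definition exec_p (ls : list mlabel) : nat := length (filter is_principal ls).
Definition der_m (ks : list rkind) : nat := length (filter (rkind_eqb Km) ks).
Definition der_e (ks : list rkind) : nat := length (filter (rkind_eqb Ke) ks).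

(* Before each calculus step the
   machine first exhausts its commutative transitions, which terminate and
   preserve the decoding up to ≡; the bisimulation ≡ transports the calculus
   step to the decoding of the resulting state, progress yields a principal
   transition of the same kind, and determinism of the calculus forces its
   decoding to be the reduct of that step.  So every calculus step costs
   exactly one principal transition of the same kind. *)
From Stdlib Require Import List Classical RelationClasses.
Import ListNotations.
Set Implicit Arguments.

#[local] Existing Instance equiv_Equivalence.

Definition counts_match (ls : list mlabel) (ks : list rkind) : Prop :=
  exec_m ls = der_m ks /\ exec_e ls = der_e ks /\ exec_p ls = length ks.

Lemma counts_match_nil : counts_match [] [].
Proof. repeat split. Qed.

Lemma counts_match_cons (n : nat) (x : rkind) ls ks :
  counts_match ls ks ->
  counts_match (repeat Lc n ++ label_of_kind x :: ls) (x :: ks).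
Proof.
  unfold counts_match, exec_m, exec_e, exec_p, der_m, der_e.
  intros (Hm & He & Hp).
  induction n as [|n IH]; [|exact IH].
  destruct x; simpl; rewrite ?Hm, ?He, ?Hp; auto.
Qed.

Section Simulation.

Variable D : Distillery.
Hypothesis D_distillery : is_distillery D.
Hypothesis D_reflective : reflective D.
Hypothesis D_deterministic : calculus_deterministic D.

Definition c_normal (s : State D) : Prop := forall s', ~ step D s Lc s'.

Lemma run_reachable s s' ls : run D s s' ls -> reachable D s -> reachable D s'.
Proof.
  induction 1 as [|l s s1 s2 ls Hstep _ IH]; intros Hs; auto.
  exact (IH (reach_step _ _ Hs Hstep)).
Qed.

Lemma run_app s1 s2 s3 ls1 ls2 :
  run D s1 s2 ls1 -> run D s2 s3 ls2 -> run D s1 s3 (ls1 ++ ls2).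
Proof. induction 1; intros; simpl; auto. econstructor; eauto. Qed.

Lemma commutative_normalize s : reachable D s ->
  exists s0 n, run D s s0 (repeat Lc n) /\ c_normal s0 /\
               equiv D (decode D s) (decode D s0).
Proof.
  intros Hs. destruct D_reflective as [Hterm _].
  induction (Hterm s Hs) as [s _ IH].
  destruct (classic (exists s1, step D s Lc s1)) as [[s1 Hs1]|Hnf].
  - destruct (IH s1 Hs1 (reach_step _ _ Hs Hs1)) as (s0 & n & Hrun & Hnf & Heq).
    exists s0, (S n); split; [econstructor; eauto|split; [exact Hnf|]].
    etransitivity; [exact (proj1 D_distillery s s1 Hs Hs1)|exact Heq].
  - exists s, 0; split; [constructor|split; [|reflexivity]].
    intros s' Hs'; apply Hnf; eauto.
Qed.

Lemma principal_step_simulation {x u u' s} :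
  reachable D s -> equiv D u (decode D s) -> red D x u u' ->
  exists s1 n, run D s s1 (repeat Lc n ++ [label_of_kind x]) /\
               reachable D s1 /\ equiv D u' (decode D s1).
Proof.
  intros Hs Hu Hred.
  destruct (commutative_normalize Hs) as (s0 & n & Hrun & Hnf & Heq0).
  assert (Hs0 : reachable D s0) by exact (run_reachable Hrun Hs).
  destruct (equiv_bisim D x u (decode D s0) u') as (w & Hw & Huw);
    [etransitivity; eauto|exact Hred|].
  destruct (proj2 D_reflective s0 x w Hs0 Hnf Hw) as [s1 Hs1].
  destruct (proj2 D_distillery x s0 s1 Hs0 Hs1) as (w' & Hw' & Hw's1).
  destruct (D_deterministic _ _ _ _ _ Hw Hw') as [_ <-].
  exists s1, n; split; [|split].
  - apply (run_app Hrun). econstructor; [exact Hs1|constructor].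
  - exact (reach_step _ _ Hs0 Hs1).
  - etransitivity; eauto.
Qed.

Lemma derivation_simulation u t ks : derivation D u t ks ->
  forall s, reachable D s -> equiv D u (decode D s) ->
  exists s' ls, run D s s' ls /\ equiv D t (decode D s') /\ counts_match ls ks.
Proof.
  induction 1 as [t|x u u' t ks Hred _ IH]; intros s Hs Hu.
  - exists s, []; split; [constructor|split; [exact Hu|exact counts_match_nil]].
  - destruct (principal_step_simulation Hs Hu Hred) as (s1 & n & Hrun & Hs1 & Hu').
    destruct (IH s1 Hs1 Hu') as (s' & ls & Hrun' & Ht & Hcount).
    exists s', (repeat Lc n ++ label_of_kind x :: ls); split; [|split; [exact Ht|]].
    + replace (repeat Lc n ++ label_of_kind x :: ls)
        with ((repeat Lc n ++ [label_of_kind x]) ++ ls)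
        by (rewrite <- app_assoc; reflexivity).
      exact (run_app Hrun Hrun').
    + exact (counts_match_cons n x Hcount).
Qed.

End Simulation.

Theorem mainTheorem5 :
  forall D : Distillery,
    is_distillery D -> reflective D -> calculus_deterministic D ->
    forall (s : State D), initial D s ->
    forall (t : Term D) (ks : list rkind), derivation D (decode D s) t ks ->
    exists (s' : State D) (ls : list mlabel),
      execution D s s' ls /\
      equiv D t (decode D s') /\
      exec_m ls = der_m ks /\
      exec_e ls = der_e ks /\
      exec_p ls = length ks.
Proof.
  intros D Hd Hr Hdet s Hs t ks Hder.
  destruct (derivation_simulation Hd Hr Hdet Hder (reach_init D _ Hs) (reflexivity _))
    as (s' & ls & Hrun & Ht & Hcount).
  exists s', ls; split; [split; assumption|split; [exact Ht|exact Hcount]].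
Qed.
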